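(* Let $R$ be a commutative ring, $\mathcal{A}=\{L_1,\dots,L_n\}$ an arrangement of affine lines in $\mathbb{C}^2$ with parallel class decomposition $\mathcal{A}_1\sqcup\dots\sqcup\mathcal{A}_s$, and $\Delta_{tot}:A^*_R(\mathcal{A})\to A^*_R(\mathcal{C}_s)$ the $R$-algebra homomorphism with $e_i\mapsto\tilde e_\alpha$ for $L_i\in\mathcal{A}_\alpha$. Let $\xi=\sum_{i=1}^n a_ie_i\in A^1_R(\mathcal{A})$ and $\eta\in A^1_R(\mathcal{A})_0$. If $\sum_{i=1}^n a_i\in R^\times$ and $\xi\wedge\eta=0$, then $\Delta_{tot}(\eta)=0$.
   Context: The parallel class decomposition partitions $\mathcal{A}$ so that two lines are parallel iff they lie in the same class. $\mathcal{C}_s$ is an arrangement of $s$ distinct lines through the origin in $\mathbb{C}^2$ with Orlik–Solomon generators $\tilde e_1,\dots,\tilde e_s$. The Orlik–Solomon algebra $A^*_R(\mathcal{A})$ of an arrangement $\mathcal{A}=\{L_1,\dots,L_n\}$ of affine lines in $\mathbb{C}^2$ over a commutative ring $R$ is the graded $R$-algebra with $A^0_R=R$, $A^1_R=\bigoplus_{i=1}^n R e_i$, $A^2_R=\bigwedge^2 A^1_R/I$ where $I$ is the $R$-submodule generated by (i) $e_i\wedge e_j$ for each pair of parallel lines $L_i\parallel L_j$ and (ii) $e_i\wedge e_j-e_i\wedge e_k+e_j\wedge e_k$ for each triple of lines with $L_i\cap L_j\cap L_k\neq\emptyset$, and $A^q_R=0$ for $q\ge3$. $A^1_R(\mathcal{A})_0=\{c_1e_1+\dots+c_ne_n\mid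 c_1+\dots+c_n=0\}$. *)

From HB Require Import structures.
From mathcomp Require Import all_boot all_order all_algebra.
Set Implicit Arguments. Unset Strict Implicit. Unset Printing Implicit Defensive.
Import Order.TTheory GRing.Theory Num.Theory.
Local Open Scope ring_scope.

(* K plays the role of C (any numClosedFieldType). *)

Definition on_line (K : fieldType) n (la lb lc : 'I_n -> K) (i : 'I_n) (x y : K) :=
  la i * x + lb i * y = lc i.

Definition line_arrangement (K : fieldType) n (la lb lc : 'I_n -> K) : Prop :=
  (forall i, (la i, lb i) != (0, 0)) /\
  (forall i j, i != j ->
     ~ (forall x y, on_line la lb lc i x y <-> on_line la lb lc j x y)).

Definition parallel (K : fieldType) n (la lb : 'I_n -> K) (i j : 'I_n) : Prop :=
  la i * lb j = la j * lb i.

Definition concurrent (K : fieldType) n (la lb lc : 'I_n -> K) (i j k : 'I_n) : Prop :=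
  exists x y, [/\ on_line la lb lc i x y, on_line la lb lc j x y & on_line la lb lc k x y].

(* Bigwedge^2 A^1_R is represented by alternating coefficient matrices:
   w p q = coefficient of e_p /\ e_q (w q p = - w p q). *)

Definition wedge (R : comPzRingType) n (u v : 'I_n -> R) : 'I_n -> 'I_n -> R :=
  fun p q => u p * v q - u q * v p.

Definition basis_e (R : comPzRingType) n (i : 'I_n) : 'I_n -> R :=
  fun p => (p == i)%:R.

Definition ee (R : comPzRingType) n (i j : 'I_n) := wedge (basis_e R i) (basis_e R j).

(* w lies in the ideal I generated by
   (i) e_i/\e_j for L_i || L_j, (ii) e_i/\e_j - e_i/\e_k + e_j/\e_k for concurrent triples.
   (Degenerate index coincidences give the zero generator, so they are harmless.) *)
Definition in_OS_ideal (K : fieldType) (R : comPzRingType) n (la lb lc : 'I_n -> K)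
    (w : 'I_n -> 'I_n -> R) : Prop :=
  exists (c : 'I_n -> 'I_n -> R) (d : 'I_n -> 'I_n -> 'I_n -> R),
    (forall i j, ~ parallel la lb i j -> c i j = 0) /\
    (forall i j k, ~ concurrent la lb lc i j k -> d i j k = 0) /\
    forall p q,
      w p q = \sum_i \sum_j c i j * ee R i j p q
            + \sum_i \sum_j \sum_k d i j k * (ee R i j p q - ee R i k p q + ee R j k p q).

Definition OS_wedge_zero (K : fieldType) (R : comPzRingType) n (la lb lc : 'I_n -> K)
    (xi eta : 'I_n -> R) : Prop :=
  in_OS_ideal la lb lc (wedge xi eta).

Definition is_unit (R : comPzRingType) (a : R) : Prop := exists b, a * b = 1.

(* parallel class decomposition A_1 |_| ... |_| A_s given by cls : 'I_n -> 'I_s: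
   surjective, and cls i = cls j iff L_i, L_j parallel *)
Definition parallel_class_decomp (K : fieldType) n s (la lb : 'I_n -> K)
    (cls : 'I_n -> 'I_s) : Prop :=
  (forall a : 'I_s, exists i, cls i = a) /\
  (forall i j, cls i = cls j <-> parallel la lb i j).

(* Delta_tot on A^1: e_i |-> \tilde e_{cls i}, so the coefficient of \tilde e_a is
   the sum of the coefficients over the class a. *)
Definition Delta_tot1 (R : comPzRingType) n s (cls : 'I_n -> 'I_s) (eta : 'I_n -> R)
  : 'I_s -> R :=
  fun a => \sum_(i | cls i == a) eta i.

From HB Require Import structures.
From mathcomp Require Import all_boot all_order all_algebra.
From Stdlib Require Import FunctionalExtensionality.
Set Implicit Arguments. Unset Strict Implicit. Unset Printing Implicit Defensive.
Import GRing.Theory.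
Local Open Scope ring_scope.

(* Fix a parallel class a.  Contracting a bivector
   w = sum_{p,q} w_pq e_p /\ e_q against the indicator of the class a in the
   second slot gives an R-linear form F_a on bigwedge^2 A^1_R with
     F_a(u /\ v) = (sum u) * Delta_tot(v)_a - Delta_tot(u)_a * (sum v).
   In particular F_a(e_i /\ e_j) = [cls j = a] - [cls i = a], which vanishes
   when L_i || L_j (same class), and F_a kills every triple relation
   e_i/\e_j - e_i/\e_k + e_j/\e_k by telescoping.  Hence F_a vanishes on the
   Orlik-Solomon ideal, so xi /\ eta = 0 in A^2 forces F_a(xi /\ eta) = 0, i.e.
   (sum xi) * Delta_tot(eta)_a = Delta_tot(xi)_a * (sum eta) = 0, and
   Delta_tot(eta)_a = 0 since sum xi is a unit. *)

Section ClassContraction.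
Variables (R : comPzRingType) (n s : nat) (cls : 'I_n -> 'I_s) (a : 'I_s).

Definition class_contraction (w : 'I_n -> 'I_n -> R) : R :=
  \sum_p \sum_q w p q * (cls q == a)%:R.

Local Notation F := class_contraction.

Lemma eq_class_contraction (w w' : 'I_n -> 'I_n -> R) :
  (forall p q, w p q = w' p q) -> F w = F w'.
Proof. by move=> eww'; apply: eq_bigr => p _; apply: eq_bigr => q _; rewrite eww'. Qed.

Lemma class_contraction_sum (I : finType) (G : I -> 'I_n -> 'I_n -> R) :
  F (fun p q => \sum_i G i p q) = \sum_i F (G i).
Proof.
rewrite /class_contraction.
under eq_bigr do under eq_bigr do rewrite mulr_suml.
by under eq_bigr do rewrite exchange_big; rewrite exchange_big.
Qed.

Lemma class_contractionD (G H : 'I_n -> 'I_n -> R) :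
  F (fun p q => G p q + H p q) = F G + F H.
Proof.
rewrite /class_contraction -big_split; apply: eq_bigr => p _.
by rewrite -big_split; apply: eq_bigr => q _; rewrite mulrDl.
Qed.

Lemma class_contractionB (G H : 'I_n -> 'I_n -> R) :
  F (fun p q => G p q - H p q) = F G - F H.
Proof.
rewrite /class_contraction -sumrB; apply: eq_bigr => p _.
by rewrite -sumrB; apply: eq_bigr => q _; rewrite mulrBl.
Qed.

Lemma class_contractionZ (c : R) (G : 'I_n -> 'I_n -> R) :
  F (fun p q => c * G p q) = c * F G.
Proof.
rewrite /class_contraction mulr_sumr; apply: eq_bigr => p _.
by rewrite mulr_sumr; apply: eq_bigr => q _; rewrite mulrA.
Qed.

Lemma class_contraction_tensor (u v : 'I_n -> R) :
  F (fun p q => u p * v q) = (\sum_i u i) * Delta_tot1 cls v a.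
Proof.
rewrite /class_contraction mulr_suml; apply: eq_bigr => p _.
rewrite /Delta_tot1 [in RHS]big_mkcond /= mulr_sumr; apply: eq_bigr => q _.
by rewrite -mulrA; case: (cls q == a); rewrite ?mulr1 ?mulr0.
Qed.

Lemma class_contraction_wedge (u v : 'I_n -> R) :
  F (wedge u v) =
    (\sum_i u i) * Delta_tot1 cls v a - Delta_tot1 cls u a * (\sum_i v i).
Proof.
rewrite (@eq_class_contraction _ (fun p q => u p * v q - v p * u q)); last first.
  by move=> p q; rewrite /wedge (mulrC (u q)).
by rewrite class_contractionB !class_contraction_tensor [X in _ - X]mulrC.
Qed.

Lemma sum_basis_e (i : 'I_n) : \sum_q basis_e R i q = 1.
Proof.
rewrite (bigD1 i) //= big1 ?addr0 /basis_e ?eqxx //.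
by move=> q /negbTE ->.
Qed.

Lemma Delta_tot1_basis_e (i : 'I_n) :
  Delta_tot1 cls (basis_e R i) a = (cls i == a)%:R.
Proof.
rewrite /Delta_tot1 big_mkcond /= (bigD1 i) //= /basis_e eqxx.
rewrite big1 ?addr0; first by case: (cls i == a).
by move=> q /negbTE ->; case: (cls q == a).
Qed.

Lemma class_contraction_ee (i j : 'I_n) :
  F (ee R i j) = (cls j == a)%:R - (cls i == a)%:R.
Proof.
by rewrite /ee class_contraction_wedge !sum_basis_e !Delta_tot1_basis_e mul1r mulr1.
Qed.

Lemma class_contraction_ee_same (i j : 'I_n) :
  cls i = cls j -> F (ee R i j) = 0.
Proof. by move=> eq_ij; rewrite class_contraction_ee eq_ij subrr. Qed.

Lemma class_contraction_triple (i j k : 'I_n) :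
  F (fun p q => ee R i j p q - ee R i k p q + ee R j k p q) = 0.
Proof.
rewrite class_contractionD class_contractionB !class_contraction_ee.
by rewrite opprB !addrA !subrK subrr.
Qed.

Lemma class_contraction_OS_ideal (K : fieldType) (la lb lc : 'I_n -> K)
    (w : 'I_n -> 'I_n -> R) :
  (forall i j, parallel la lb i j -> cls i = cls j) ->
  in_OS_ideal la lb lc w -> F w = 0.
Proof.
move=> par_cls [c [d [c_par [_ w_def]]]].
rewrite (@eq_class_contraction _ (fun p q => _ + _) w_def).
rewrite class_contractionD !class_contraction_sum.
have parallel_part : forall i j, F (fun p q => c i j * ee R i j p q) = 0.
  move=> i j; rewrite class_contractionZ.
  have [eq_ij | neq_ij] := eqVneq (cls i) (cls j).
    by rewrite class_contraction_ee_same // mulr0.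
  by rewrite c_par ?mul0r // => /par_cls /eqP; rewrite (negbTE neq_ij).
rewrite big1 ?add0r => [|i _]; last first.
  by rewrite class_contraction_sum big1 // => j _; apply: parallel_part.
apply: big1 => i _; rewrite class_contraction_sum; apply: big1 => j _.
rewrite class_contraction_sum; apply: big1 => k _.
by rewrite class_contractionZ class_contraction_triple mulr0.
Qed.

End ClassContraction.

Theorem lemma3p2 (K : numClosedFieldType) (R : comPzRingType) (n s : nat)
    (la lb lc : 'I_n -> K) (cls : 'I_n -> 'I_s)
    (xi eta : 'I_n -> R) :
  line_arrangement la lb lc ->
  parallel_class_decomp la lb cls ->
  \sum_i eta i = 0 ->
  is_unit (\sum_i xi i) ->
  OS_wedge_zero la lb lc xi eta ->
  Delta_tot1 cls eta = (fun _ => 0).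
Proof.
move=> _ [_ cls_par] eta0 [b sum_xi_b] wedge0.
apply: functional_extensionality => a.
have par_cls : forall i j, parallel la lb i j -> cls i = cls j.
  by move=> i j /cls_par.
have := class_contraction_OS_ideal a par_cls wedge0.
rewrite class_contraction_wedge eta0 mulr0 subr0 => sum_xi_Delta0.
by rewrite -[LHS]mul1r -sum_xi_b mulrAC sum_xi_Delta0 mul0r.
Qed.
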